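(* There is a constant $N>0$ such that for every discriminant $D\in\mathcal{O}_d$ with $|D|>N$ the following holds: if $\epsilon_D=\frac12(t_0+u_0\sqrt{D})$ is a fundamental solution of $t^2-u^2D=4$ and $\epsilon_D^{\,n+1}=\frac12(t_n+u_n\sqrt{D})$ with $t_n,u_n\in\mathcal{O}_d$, then $|t_n|<\frac49|u_n|^2$ for all $n\ge 2$.
   Context: $d\in\{1,2,3,7,11,19,43,67,163\}$ (so $k_d=\mathbb{Q}(\sqrt{-d})$ has class number one), $\mathcal{O}_d$ is the ring of integers of $k_d$. An element $D\in\mathcal{O}_d$ is a discriminant if $D$ is not a perfect square in $\mathcal{O}_d$ and $D\equiv x^2\pmod{4\mathcal{O}_d}$ for some $x\in\mathcal{O}_d$. The square root $\sqrt{D}$ is chosen with argument in $[0,\pi)$. For a solution $(t,u)\in\mathcal{O}_d^2$ of $t^2-u^2D=4$ set $\epsilon_{t,u}=\frac12(t+u\sqrt{D})$. A solution $(t_0,u_0)$ is fundamental if $|\epsilon_{t_0,u_0}|$ is the smallest value larger than $1$ among all $|\epsilon_{t,u}|$; then $\epsilon_D=\epsilon_{t_0,u_0}$. *)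

From HB Require Import structures.
From mathcomp Require Import all_boot all_order all_algebra.
From mathcomp Require Import all_field.
Set Implicit Arguments. Unset Strict Implicit. Unset Printing Implicit Defensive.
Import Order.TTheory GRing.Theory Num.Theory.
Local Open Scope ring_scope.

Definition class_number_one_d (d : nat) : bool :=
  d \in [:: 1; 2; 3; 7; 11; 19; 43; 67; 163]%N.

Definition in_kd (d : nat) (x : algC) : Prop :=
  exists a b : rat, x = ratr a + ratr b * sqrtC (- (d%:R)).

Definition in_Od (d : nat) (x : algC) : Prop := in_kd d x /\ x \in Aint.

Definition is_discriminant (d : nat) (D : algC) : Prop :=
  [/\ in_Od d D,
      ~ (exists y, in_Od d y /\ D = y ^+ 2) &
      exists x, in_Od d x /\ exists z, in_Od d z /\ D - x ^+ 2 = 4 * z].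

Definition is_principal_sqrt (D s : algC) : Prop :=
  s ^+ 2 = D /\ (0 < 'Im s \/ ('Im s = 0 /\ 0 < 'Re s)).

Definition pell_sol (d : nat) (D t u : algC) : Prop :=
  [/\ in_Od d t, in_Od d u & t ^+ 2 - u ^+ 2 * D = 4].

Definition eps (sD t u : algC) : algC := (t + u * sD) / 2.

Definition fundamental_sol (d : nat) (D sD t0 u0 : algC) : Prop :=
  [/\ pell_sol d D t0 u0, 1 < `|eps sD t0 u0| &
      forall t u, pell_sol d D t u -> 1 < `|eps sD t u| ->
        `|eps sD t0 u0| <= `|eps sD t u| ].

From HB Require Import structures.
From mathcomp Require Import all_boot all_order all_algebra.
From mathcomp Require Import all_field.
From mathcomp Require Import ring lra.
Set Implicit Arguments. Unset Strict Implicit. Unset Printing Implicit Defensive.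
Import Order.TTheory GRing.Theory Num.Theory.
Local Open Scope ring_scope.

(* The conjugate e' = (t0 - u0 sqrt D)/2 satisfies e e' = 1.  As sqrt D is an
   algebraic integer whose square D is not a square in O_d, it is not in k_d,
   so coordinates over k_d(sqrt D) are unique and e'^(n+1) = (tn - un sqrt D)/2.
   Hence tn = e^(n+1) + e'^(n+1) and un sqrt D = e^(n+1) - e'^(n+1), and with
   r = |e| > 1, |e'| = 1/r this gives |tn| <= r^(n+1) + 1 and
   |un| |sqrt D| >= r^(n+1) - 1, while |u0| >= 1 gives |sqrt D| <= r + 1.  For
   |D| > 1600 and n >= 2 these bounds force 9 |tn| < 4 |un|^2. *)

Lemma Aint_root n x : (0 < n)%N -> x ^+ n \in Aint -> x \in Aint.
Proof.
move=> n_gt0 xnA; apply: (@root_monic_Aint (minCpoly (x ^+ n) \Po 'X^n)).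
- by rewrite root_comp hornerXn root_minCpoly.
- apply/monicP; rewrite lead_coef_comp ?size_polyXn ?ltnS //.
  by rewrite (monicP (minCpoly_monic _)) lead_coefXn expr1n mul1r.
- by apply: polyOver_comp => //; rewrite polyOverXn.
Qed.

Section QuadraticField.

Variable d : nat.
Hypothesis d_gt0 : (0 < d)%N.
Local Notation kd := (in_kd d).
Local Notation w := (sqrtC (- d%:R : algC)).

Lemma conj_sqrtCNn : w^* = - w.
Proof.
have w2 : w ^+ 2 = - d%:R := sqrtCK _.
have : (w^* - w) * (w^* + w) = 0.
  by rewrite -subr_sqr -rmorphXn w2 rmorphN rmorph_nat subrr.
move/eqP; rewrite mulf_eq0 subr_eq0 addr_eq0 => /orP[/eqP wR | /eqP //].
have : w \is Num.real by rewrite CrealE wR.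
by rewrite realEsqr w2 oppr_ge0 lern0 eqn0Ngt d_gt0.
Qed.

Lemma kd_ratr q : kd (ratr q).
Proof. by exists q, 0; rewrite rmorph0 mul0r addr0. Qed.

Lemma kd_Crat x : x \in Crat -> kd x.
Proof. by move=> /CratP[q ->]; apply: kd_ratr. Qed.

Lemma kd_nat n : kd n%:R.
Proof. by apply: kd_Crat; apply: rpred_nat. Qed.

Lemma kdD x y : kd x -> kd y -> kd (x + y).
Proof. by move=> [a [b ->]] [c [e ->]]; exists (a + c), (b + e); rewrite !rmorphD; ring. Qed.

Lemma kdN x : kd x -> kd (- x).
Proof. by move=> [a [b ->]]; exists (- a), (- b); rewrite !rmorphN; ring. Qed.

Lemma kdM x y : kd x -> kd y -> kd (x * y).
Proof.
move=> [a [b ->]] [c [e ->]]; exists (a * c - d%:R * b * e), (a * e + b * c).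
by rewrite rmorphB rmorphD !rmorphM rmorph_nat; ring: (sqrtCK (- d%:R : algC)).
Qed.

Lemma conj_kd_coord a b : (ratr a + ratr b * w)^* = ratr a - ratr b * w.
Proof.
have [ca cb] := (conj_Crat (Crat_rat a), conj_Crat (Crat_rat b)).
by rewrite (rmorphD Num.conj) /= ca (rmorphM Num.conj) /= cb conj_sqrtCNn mulrN.
Qed.

Lemma kd_conj x : kd x -> kd x^*.
Proof. by move=> [a [b ->]]; exists a, (- b); rewrite conj_kd_coord rmorphN mulNr. Qed.

Lemma kd_normCK_rat x : kd x -> `|x| ^+ 2 \in Crat.
Proof.
move=> [a [b ->]]; rewrite normCK conj_kd_coord.
have -> : (ratr a + ratr b * w) * (ratr a - ratr b * w)
          = ratr (a ^+ 2 + d%:R * b ^+ 2).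
  by rewrite rmorphD rmorphM !rmorphXn rmorph_nat; ring: (sqrtCK (- d%:R : algC)).
exact: Crat_rat.
Qed.

Lemma kdV x : kd x -> kd x^-1.
Proof.
move=> kx; rewrite invC_norm; apply: kdM; last exact: kd_conj.
by apply: kd_Crat; rewrite rpredV kd_normCK_rat.
Qed.

Lemma kd_div x y : kd x -> kd y -> kd (x / y).
Proof. by move=> kx ky; apply: kdM => //; apply: kdV. Qed.

Lemma Od_norm_ge1 u : in_Od d u -> u != 0 -> 1 <= `|u|.
Proof.
move=> [ku uA] u_neq0.
have u2Z : `|u| ^+ 2 \is a Num.int.
  by apply: Cint_rat_Aint; rewrite ?kd_normCK_rat // normCK rpredM ?Aint_aut.
have := norm_intr_ge1 u2Z; rewrite sqrf_eq0 normr_eq0 u_neq0 => /(_ isT).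
rewrite ger0_norm ?exprn_ge0 // -[X in X <= _](expr1n _ 2).
by rewrite ler_pXn2r // nnegrE.
Qed.

Lemma kd_coord_inj s T U T' U' : ~ kd s -> kd T -> kd U -> kd T' -> kd U' ->
  T + U * s = T' + U' * s -> T = T' /\ U = U'.
Proof.
move=> ks kT kU kT' kU' eq_coord.
have [eqU | neqU] := eqVneq U U'.
  by split=> //; apply: (addIr (U * s)); rewrite eq_coord eqU.
have eq_diff : T - T' = (U' - U) * s by rewrite -[T](addrK (U * s)) eq_coord; ring.
have eq_s : s = (T - T') / (U' - U) by rewrite eq_diff mulrC mulKf // subr_eq0 eq_sym.
by case: ks; rewrite eq_s; apply: kd_div; apply: kdD => //; apply: kdN.
Qed.

End QuadraticField.

Lemma sqrt_disc_notin_kd d D s :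
  (0 < d)%N -> is_discriminant d D -> s ^+ 2 = D -> ~ in_kd d s.
Proof.
move=> d_gt0 [[_ DA] Dnsq _] s2 ks; apply: Dnsq; exists s; split=> //.
by split=> //; apply: (@Aint_root 2); rewrite ?s2.
Qed.

Lemma eps_mul z T U t u :
  eps z T U * eps z t u = eps z ((T * t + U * u * z ^+ 2) / 2) ((T * u + U * t) / 2).
Proof. by rewrite /eps; field. Qed.

Lemma pell_norm_estimate (F : realFieldType) (r z R A B : F) :
  40 < z -> z <= r + 1 -> r ^+ 3 <= R -> A <= R + 1 -> R - 1 <= B * z ->
  9 * A < 4 * B ^+ 2.
Proof.
move=> z_gt40 z_le r3_le A_le R_le.
have r_gt39 : 39 < r by lra.
have R_ge : 39 * r ^+ 2 <= R by nra.
have z2_le : 39 * z ^+ 2 <= 2 * R by nra.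
have R_gt3 : 3 < R by nra.
have : (R - 1) ^+ 2 <= B ^+ 2 * z ^+ 2 by nra.
have : 39 * (9 * (R + 1) * z ^+ 2) <= 18 * (R + 1) * R by nra.
have : 18 * (R + 1) * R < 156 * (R - 1) ^+ 2 by nra.
nra.
Qed.

(* The ring operations and the order of [algR] compute on the underlying
   [algC] values, so an [algR] statement about [normR x] is convertible to the
   same statement about [`|x|]. *)
Definition normR (x : algC) : algR := in_algR (normr_real x).

Section PellPowers.

Variables (d : nat) (D s t0 u0 : algC).
Local Notation kd := (in_kd d).
Hypotheses (d_gt0 : (0 < d)%N) (s2 : s ^+ 2 = D) (pell : t0 ^+ 2 - u0 ^+ 2 * D = 4).
Hypotheses (kD : kd D) (kt0 : kd t0) (ku0 : kd u0).
Local Notation e := (eps s t0 u0).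
Local Notation e' := (eps (- s) t0 u0).

Lemma eps_mul_conj : e * e' = 1.
Proof.
have norm4 : (t0 + u0 * s) * (t0 + u0 * - s) = 4 by rewrite -pell -s2; ring.
by rewrite /eps mulf_div norm4; field.
Qed.

Lemma eps_pow_coord k :
  exists T U, [/\ kd T, kd U, e ^+ k = eps s T U & e' ^+ k = eps (- s) T U].
Proof.
elim: k => [|k [T [U [kT kU eT eT']]]].
  exists 2, 0; rewrite !expr0 /eps !mul0r addr0 divff ?pnatr_eq0 //.
  by split=> //; apply: kd_Crat; rewrite ?rpred0 ?rpred_nat.
exists ((T * t0 + U * u0 * D) / 2), ((T * u0 + U * t0) / 2).
have k2 : kd 2 := kd_nat d 2.
split; try by apply: kd_div => //; apply: kdD; do ?apply: kdM.
- by rewrite exprSr eT eps_mul s2.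
- by rewrite exprSr eT' eps_mul sqrrN s2.
Qed.

Lemma eps_conj_pow n tn un : ~ kd s -> kd tn -> kd un ->
  e ^+ n = eps s tn un -> e' ^+ n = eps (- s) tn un.
Proof.
move=> ks ktn kun eq_n.
have [T [U [kT kU eT eT']]] := eps_pow_coord n.
have half_neq0 : (2 : algC)^-1 != 0 by rewrite invr_eq0 pnatr_eq0.
have [-> ->] : tn = T /\ un = U.
  apply: kd_coord_inj ks _ _ _ _ _ => //.
  exact: (mulIf half_neq0 (etrans (esym eq_n) eT)).
exact: eT'.
Qed.

Lemma eps_u_neq0 : 1 < `|e| -> u0 != 0.
Proof.
apply: contraTneq => u0_0.
have e_sqr : e ^+ 2 = 1 by rewrite -eps_mul_conj /eps u0_0 !mul0r.
have /eqP -> : `|e| == 1 by rewrite -sqrp_eq1 // -normrX e_sqr normr1.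
by rewrite ltxx.
Qed.

Lemma norm_eps_conj : `|e'| = `|e|^-1.
Proof.
have e_neq0 : e != 0.
  by apply/eqP => e0; move: eps_mul_conj; rewrite e0 mul0r => /esym/eqP; rewrite oner_eq0.
by rewrite -(mulKf e_neq0 e') eps_mul_conj mulr1 normfV.
Qed.

Lemma eps_pow_trace_lt n tn un :
  (2 <= n)%N -> 1 < `|e| -> 1 <= `|u0| -> 40 < `|s| ->
  e ^+ n.+1 = eps s tn un -> e' ^+ n.+1 = eps (- s) tn un ->
  `|tn| < 4 / 9 * `|un| ^+ 2.
Proof.
move=> n_ge2 e_gt1 u0_ge1 s_gt40 eq_n eq_n'.
have e'_le1 : `|e'| <= 1 by rewrite norm_eps_conj invf_le1 ?ltW // (lt_trans ltr01).
have e'n_le1 : `|e' ^+ n.+1| <= 1 by rewrite normrX exprn_ile1.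
have tn_sum : tn = e ^+ n.+1 + e' ^+ n.+1 by rewrite eq_n eq_n' /eps; field.
have un_diff : un * s = e ^+ n.+1 - e' ^+ n.+1 by rewrite eq_n eq_n' /eps; field.
have u0_diff : u0 * s = e - e' by rewrite /eps; field.
have s_le : `|s| <= `|e| + 1.
  rewrite (le_trans (ler_peMl _ u0_ge1)) // -normrM u0_diff.
  by rewrite (le_trans (ler_normB _ _)) // lerD2l.
have tn_le : `|tn| <= `|e ^+ n.+1| + 1.
  by rewrite tn_sum (le_trans (ler_normD _ _)) // lerD2l.
have un_ge : `|e ^+ n.+1| - 1 <= `|un| * `|s|.
  by rewrite -normrM un_diff (le_trans _ (lerB_dist _ _)) // lerD2l lerN2.
have en_ge : `|e| ^+ 3 <= `|e ^+ n.+1| by rewrite normrX ler_eXn2l.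
have := @pell_norm_estimate algR (normR e) (normR s) (normR (e ^+ n.+1))
  (normR tn) (normR un) s_gt40 s_le en_ge tn_le un_ge.
by rewrite mulrAC ltr_pdivlMr ?ltr0n // mulrC.
Qed.

End PellPowers.

Theorem lemma4p5 (d : nat) (hd : class_number_one_d d) :
  exists N : algC, 0 < N /\
  forall D : algC, is_discriminant d D -> N < `|D| ->
  forall sD : algC, is_principal_sqrt D sD ->
  forall t0 u0 : algC, fundamental_sol d D sD t0 u0 ->
  forall (n : nat) (tn un : algC), (2 <= n)%N -> in_Od d tn -> in_Od d un ->
    eps sD t0 u0 ^+ n.+1 = (tn + un * sD) / 2 ->
    `|tn| < 4 / 9 * `|un| ^+ 2.
Proof.
have d_gt0 : (0 < d)%N by case: d hd.
exists 1600; split; first by rewrite ltr0n.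
move=> D discD D_gt s [s2 _] t0 u0 [[Ot0 Ou0 pell] e_gt1 _] n tn un n_ge2 [ktn _] [kun _] eq_n.
have [[kD _] _ _] := discD.
have [[kt0 _] [ku0 _]] := (Ot0, Ou0).
have ks := sqrt_disc_notin_kd d_gt0 discD s2.
have s_gt40 : 40 < `|s|.
  by rewrite -(ltr_pXn2r (ltn0Sn 1)) ?nnegrE // -normrX s2 -natrX.
have u0_ge1 := Od_norm_ge1 d_gt0 Ou0 (eps_u_neq0 s2 pell e_gt1).
have eq_n' := eps_conj_pow d_gt0 s2 kD kt0 ku0 ks ktn kun eq_n.
exact: (eps_pow_trace_lt s2 pell n_ge2 e_gt1 u0_ge1 s_gt40 eq_n eq_n').
Qed.
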